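(* Let $TS=(S,\to,T,s_0)$ be the labelled transition system with states $S=\{s_0,s_1,s_2,s_3,s_4,s_5,s_6\}$, labels $T=\{a,b,c,d\}$, initial state $s_0$, and exactly the following ten arcs: $s_0\xrightarrow{a}s_1$, $s_0\xrightarrow{b}s_2$, $s_1\xrightarrow{b}s_3$, $s_2\xrightarrow{a}s_3$, $s_3\xrightarrow{c}s_4$, $s_4\xrightarrow{a}s_5$, $s_4\xrightarrow{d}s_0$, $s_5\xrightarrow{b}s_6$, $s_5\xrightarrow{d}s_1$, $s_6\xrightarrow{d}s_3$. Then there is no safe (i.e. $1$-bounded) Petri net with transition set $\{a,b,c,d\}$ that solves $TS$. More precisely, in every Petri net $N$ with transition set $\{a,b,c,d\}$ solving $TS$, if $M_4$ denotes the reachable marking corresponding to $s_4$, there is a place $p$ with $M_4(p)<F(p,b)$, and every such place $p$ carries at least $2$ tokens in the marking reached from $M_4$ by firing $ad$.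
   Context: A Petri net is a tuple $N=(P,T,F,M_0)$ with finite disjoint sets $P$ (places) and $T$ (transitions), a flow function $F\colon (P\times T)\cup(T\times P)\to\mathbb{N}$, and an initial marking $M_0\colon P\to\mathbb{N}$. A transition $t$ is enabled at a marking $M$ if $M(p)\ge F(p,t)$ for all $p\in P$; firing it yields $M'$ with $M'(p)=M(p)-F(p,t)+F(t,p)$. The reachability graph of $N$ is the labelled transition system whose states are the markings reachable from $M_0$, with initial state $M_0$ and arcs $(M,t,M')$ whenever $M$ is reachable and $t$ fires from $M$ to $M'$. $N$ solves a labelled transition system $TS$ (with label set equal to $T$) if its reachability graph is isomorphic to $TS$, i.e. there is a bijection between states mapping initial state to initial state and preserving and reflecting labelled arcs. $N$ is $k$-bounded if $M(p)\le k$ for every reachable marking $M$ and every place $p$; safe means $1$-bounded. *)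

From mathcomp Require Import all_boot.
Set Implicit Arguments. Unset Strict Implicit. Unset Printing Implicit Defensive.

Inductive trans := ta | tb | tc | td.

Inductive state := s0 | s1 | s2 | s3 | s4 | s5 | s6.

Inductive arc : state -> trans -> state -> Prop :=
| arc01 : arc s0 ta s1
| arc02 : arc s0 tb s2
| arc13 : arc s1 tb s3
| arc23 : arc s2 ta s3
| arc34 : arc s3 tc s4
| arc45 : arc s4 ta s5
| arc40 : arc s4 td s0
| arc56 : arc s5 tb s6
| arc51 : arc s5 td s1
| arc63 : arc s6 td s3.

(* A Petri net with finite place set P and transition set trans:
   the flow F is split into pre (P x T) and post (T x P). *)
Record petri_net (P : finType) := PetriNet {
  pre  : P -> trans -> nat;
  post : trans -> P -> nat;
  M0   : {ffun P -> nat}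
}.

Definition marking (P : finType) := {ffun P -> nat}.

Definition enabled (P : finType) (N : petri_net P) (M : marking P) (t : trans) : Prop :=
  forall p, pre N p t <= M p.

Definition fire (P : finType) (N : petri_net P) (M : marking P) (t : trans) : marking P :=
  [ffun p => M p - pre N p t + post N t p].

Inductive reachable (P : finType) (N : petri_net P) : marking P -> Prop :=
| reach0 : reachable N (M0 N)
| reachS : forall M t, reachable N M -> enabled N M t -> reachable N (fire N M t).

Definition rg_arc (P : finType) (N : petri_net P) (M : marking P) (t : trans) (M' : marking P) : Prop :=
  reachable N M /\ enabled N M t /\ fire N M t = M'.

Definition solves_via (P : finType) (N : petri_net P) (f : state -> marking P) : Prop :=
  [/\ f s0 = M0 N,
      (forall s, reachable N (f s)),
      injective f,
      (forall M, reachable N M -> exists s, f s = M) &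
      (forall s t s', arc s t s' <-> rg_arc N (f s) t (f s'))].

Definition solves (P : finType) (N : petri_net P) : Prop :=
  exists f : state -> marking P, solves_via N f.

Definition safe (P : finType) (N : petri_net P) : Prop :=
  forall M, reachable N M -> forall p, M p <= 1.

From Pilot Require Import Defs.
From mathcomp Require Import all_boot zify.
Set Implicit Arguments.

(* Firing an enabled transition adds the same amount F(t,p) - F(p,t) to a
   place p whatever the marking, so the two paths s4 -a-> s5 -d-> s1 and
   s4 -d-> s0 -a-> s1 give M1(p) + M4(p) = M0(p) + M5(p).  Transition b is
   enabled at s0 and s5 but not at s4, so some place p has
   M4(p) < F(p,b) <= M0(p), M5(p); hence M1(p) >= F(p,b) + 1 >= 2. *)

Lemma fire_shift (P : finType) (N : petri_net P) (M M' : marking P) t p :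
  enabled N M t -> enabled N M' t ->
  fire N M t p + M' p = fire N M' t p + M p.
Proof. by move=> /(_ p) enM /(_ p) enM'; rewrite !ffunE; lia. Qed.

Section SolvingNet.

Variables (P : finType) (N : petri_net P) (f : state -> marking P).
Hypothesis solN : solves_via N f.

Lemma solves_arc {s t s'} :
  Defs.arc s t s' -> enabled N (f s) t /\ fire N (f s) t = f s'.
Proof. by case: solN => _ _ _ _ arcE /arcE [_]. Qed.

Lemma solves_enabled s t : enabled N (f s) t -> exists s', Defs.arc s t s'.
Proof.
case: solN => _ reach _ onto arcE en.
have [s' fs'] := onto _ (reachS (reach s) en).
by exists s'; apply/arcE; rewrite fs'; split; [exact: reach | split].
Qed.

Lemma s4_disables_b : exists p, f s4 p < pre N p tb.
Proof.
apply/existsP; apply: contraT => /existsPn not_lt.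
have [s' arc4b] : exists s', Defs.arc s4 tb s'.
  by apply: solves_enabled => p; rewrite leqNgt; exact: not_lt.
by inversion arc4b.
Qed.

Lemma fire_ad_s4 : fire N (fire N (f s4) ta) td = f s1.
Proof. by rewrite (proj2 (solves_arc arc45)) (proj2 (solves_arc arc51)). Qed.

Lemma s1_diamond p : f s1 p + f s4 p = f s0 p + f s5 p.
Proof.
have [en5d fire5d] := solves_arc arc51.
have [en4d fire4d] := solves_arc arc40.
by rewrite -fire5d -fire4d fire_shift.
Qed.

Lemma b_deficit_s1 {p} : f s4 p < pre N p tb -> 2 <= f s1 p.
Proof.
have en0b := (solves_arc arc02).1 p.
have en5b := (solves_arc arc56).1 p.
by have := s1_diamond p; lia.
Qed.

End SolvingNet.

Theorem mainTheorem1 :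
  (forall (P : finType) (N : petri_net P), solves N -> ~ safe N) /\
  (forall (P : finType) (N : petri_net P) (f : state -> marking P),
     solves_via N f ->
     (exists p, f s4 p < pre N p tb) /\
     (forall p, f s4 p < pre N p tb -> 2 <= fire N (fire N (f s4) ta) td p)).
Proof.
split=> [P N [f solN] safeN | P N f solN].
  have [p deficit] := s4_disables_b solN.
  have [_ reach _ _ _] := solN.
  have := safeN _ (reach s1) p.
  by rewrite leqNgt (b_deficit_s1 solN deficit).
split; first exact: s4_disables_b.
by move=> p deficit; rewrite (fire_ad_s4 solN) (b_deficit_s1 solN deficit).
Qed.
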